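(* Let $s\ge 1$, $q=4^{2s}$, and let $\theta$ be the automorphism of $F_q$ given by $\theta(a)=a^{4^s}$. Let $n$ be an even positive integer, let $g(x)\in F_q[x;\theta]$ be a right divisor of $x^n-1$ in $F_q[x;\theta]$ whose degree $m$ is odd, and let $C=\langle g(x)\rangle$ be the skew cyclic code of length $n$ over $F_q$ it generates. If $g(x)$ is a $\theta$-palindromic polynomial, then $C$ is a reversible DNA code. Conversely, if $C$ is a reversible DNA code, then $C$ is generated by a $\theta$-palindromic polynomial.
   Context: $F_q[x;\theta]$ is the skew polynomial ring: polynomials $\sum a_ix^i$ with $a_i\in F_q$, usual addition, and multiplication determined by $xa=\theta(a)x$ for $a\in F_q$. A skew cyclic code of length $n$ is a linear code $C\subseteq F_q^n$ such that $(\theta(c_{n-1}),\theta(c_0),\ldots,\theta(c_{n-2}))\in C$ whenever $(c_0,\ldots,c_{n-1})\in C$; identifying $(c_0,\ldots,c_{n-1})$ with $c_0+c_1x+\dots+c_{n-1}x^{n-1}$, such codes are the left $F_q[x;\theta]$-submodules of $F_q[x;\theta]/(x^n-1)$, and $\langle g(x)\rangle$ denotes the left submodule generated by $g(x)$ (the generator need not be monic). A polynomial $f(x)=a_0+a_1x+\dots+a_tx^t$ of degree $t$ is palindromic if $a_i=a_{t-i}$ for all $i$, and $\theta$-palindromic if $a_i=\theta(a_{t-i})$ for all $i$. DNA correspondence: there is a fixed bijection $\tau:F_{4^{2s}}\to\{A,T,G,C\}^{2s}$ such that for every $\beta$, $\tau(\beta^{4^s})$ is the reverse of the string $\tau(\beta)$;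 it extends to $\phi:F_q^n\to\{A,T,G,C\}^{2sn}$ by concatenation. A code $C\subseteq F_q^n$ is a reversible DNA code if the reverse string $\phi(c)^r$ lies in $\phi(C)$ for all $c\in C$; equivalently, $(\theta(c_{n-1}),\ldots,\theta(c_1),\theta(c_0))\in C$ for every $(c_0,\ldots,c_{n-1})\in C$. *)

From HB Require Import structures.
From mathcomp Require Import all_boot all_order all_algebra all_field.
Set Implicit Arguments. Unset Strict Implicit. Unset Printing Implicit Defensive.
Import GRing.Theory.
Local Open Scope ring_scope.

Definition theta (s : nat) (F : finFieldType) (a : F) : F := a ^+ (4 ^ s).

(* Skew polynomials over F are represented by their coefficient sequence,
   i.e. by elements of {poly F} (addition is the usual one); the skew
   multiplication is determined by x a = th(a) x:
   (sum_i p_i x^i)(sum_j q_j x^j) = sum_k (sum_{i+j=k} p_i th^i(q_j)) x^k. *)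
Definition skew_mul (F : fieldType) (th : F -> F) (p q : {poly F}) : {poly F} :=
  \poly_(k < size p + size q)
     \sum_(i < k.+1) p`_i * iter i th (q`_(k - i)).

Definition skew_right_divides (F : fieldType) (th : F -> F) (g f : {poly F}) : Prop :=
  exists h : {poly F}, f = skew_mul th h g.

Definition poly_of_vec (F : fieldType) (n : nat) (c : 'rV[F]_n) : {poly F} :=
  \sum_(i < n) (c ord0 i)%:P * 'X^i.

(* The left F[x;th]-submodule <g> of F[x;th]/(x^n - 1) generated by g,
   viewed as a subset of F^n.  Since the ideal (x^n - 1) is two-sided here
   (th has order dividing n when used), membership of c means that
   c(x) = f*g + h*(x^n - 1) for some skew polynomials f, h. *)
Definition skew_code_gen (F : fieldType) (th : F -> F) (n : nat) (g : {poly F})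
  (c : 'rV[F]_n) : Prop :=
  exists f h : {poly F},
    poly_of_vec c = skew_mul th f g + skew_mul th h ('X^n - 1).

Definition theta_palindromic (F : fieldType) (th : F -> F) (p : {poly F}) : Prop :=
  p != 0 /\ forall i : nat, (i <= (size p).-1)%N -> p`_i = th (p`_((size p).-1 - i)).

Inductive nucleotide := nA | nT | nG | nC.

Definition DNA_correspondence (s : nat) (F : finFieldType)
  (tau : F -> seq nucleotide) : Prop :=
  [/\ forall b, size (tau b) = (2 * s)%N,
      injective tau,
      forall w : seq nucleotide, size w = (2 * s)%N -> exists b, tau b = w
    & forall b, tau (b ^+ (4 ^ s)) = rev (tau b)].

Definition phi_DNA (F : finFieldType) (tau : F -> seq nucleotide) (n : nat)
  (c : 'rV[F]_n) : seq nucleotide :=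
  flatten [seq tau (c ord0 i) | i <- enum 'I_n].

Definition reversible_DNA (F : finFieldType) (tau : F -> seq nucleotide) (n : nat)
  (C : 'rV[F]_n -> Prop) : Prop :=
  forall c, C c -> exists c', C c' /\ phi_DNA tau c' = rev (phi_DNA tau c).
Arguments skew_code_gen {F} th n g c.

From HB Require Import structures.
From mathcomp Require Import all_boot all_order all_algebra all_field.
From mathcomp Require Import zify.
Import GRing.Theory.
Local Open Scope ring_scope.
Set Implicit Arguments. Unset Strict Implicit. Unset Printing Implicit Defensive.

(* Reversing a codeword and applying theta to its entries corresponds to the
   theta-reciprocal [recip N p = sum_j theta(p_(N-j)) X^j] of its polynomial, and
   since theta is an involution, [recip] is anti-multiplicative up to a parity
   condition: [recip_N (f g) = recip_(N-m) f * recip_m g] when [deg g <= m] and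
   [N - m] is even.  If [g] is theta-palindromic ([recip_m g = g], m = deg g odd,
   N = n - 1 with n even) this maps left multiples of [g] to left multiples of [g].
   Conversely, if the reversal of [g] lies in the code, then so does
   [X^(m+1) recip_(n-1) g = X^n recip_m g], which is congruent to [recip_m g]
   because [X^n] is central; by degrees [recip_m g = lam g].  Applying [recip_m]
   again gives [theta(lam) lam = 1], and in characteristic 2 this yields
   [mu <> 0] with [theta(mu) lam = mu] (Hilbert 90), so that [mu g] is a
   theta-palindromic generator of the same code. *)

Lemma sum_triangle (R : nmodType) (G : nat -> nat -> R) k :
  \sum_(i < k.+1) \sum_(j < i.+1) G j i =
  \sum_(j < k.+1) \sum_(l < (k - j).+1) G j (j + l)%N.
Proof.
elim: k => [|k IH]; first by rewrite !big_ord1 addn0.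
rewrite big_ord_recr /= IH [RHS]big_ord_recr /= subnn big_ord1 addn0.
rewrite [in RHS](eq_bigr (fun j : 'I_k.+1 =>
  \sum_(l < (k - j).+1) G j (j + l)%N + G j k.+1)).
  by rewrite big_split /= -addrA [X in _ + X = _]big_ord_recr.
move=> j _; rewrite (subSn (leq_ord j)) big_ord_recr /=.
by congr (_ + G j _); have := ltn_ord j; lia.
Qed.

(* [size p] may occur with different (convertible) carrier-type arguments, which
   [lia] would treat as distinct atoms; naming them first identifies them. *)
Ltac size_lia :=
  repeat match goal with H : context [size (polyseq _)] |- _ => revert H end;
  repeat match goal with
  | |- context [size (polyseq ?p)] => let sz := fresh "sz" in set sz := size (polyseq p)
  end; intros; lia.

Section SkewPolynomials.
Variables (F : fieldType) (th : {rmorphism F -> F}).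
Implicit Types (p q r f g : {poly F}) (a b : F).
Local Notation "p ** q" := (skew_mul th p q) (at level 40, left associativity).

Fact iter_is_nmod_morphism i : nmod_morphism (iter i th).
Proof.
by elim: i => [|i [h0 hD]] //; split=> [|x y] /=; rewrite ?h0 ?hD ?rmorph0 ?rmorphD.
Qed.
HB.instance Definition _ i :=
  GRing.isNmodMorphism.Build F F (iter i th) (iter_is_nmod_morphism i).

Fact iter_is_monoid_morphism i : monoid_morphism (iter i th).
Proof.
by elim: i => [|i [h1 hM]] //; split=> [|x y] /=; rewrite ?h1 ?hM ?rmorph1 ?rmorphM.
Qed.
HB.instance Definition _ i :=
  GRing.isMonoidMorphism.Build F F (iter i th) (iter_is_monoid_morphism i).

Lemma coef_skew_mul p q k :
  (p ** q)`_k = \sum_(i < k.+1) p`_i * iter i th q`_(k - i).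
Proof.
rewrite coef_poly; case: ltnP => // le_pq_k; symmetry; apply: big1 => i _.
have [lt_i_p|le_p_i] := ltnP i (size p); last by rewrite nth_default ?mul0r.
by rewrite [q`__]nth_default ?rmorph0 ?mulr0 //; size_lia.
Qed.

Lemma skew_mulDl p q r : (p + q) ** r = p ** r + q ** r.
Proof.
apply/polyP => k; rewrite coefD !coef_skew_mul -big_split.
by apply: eq_bigr => i _; rewrite coefD mulrDl.
Qed.

Lemma skew_mulDr p q r : p ** (q + r) = p ** q + p ** r.
Proof.
apply/polyP => k; rewrite coefD !coef_skew_mul -big_split.
by apply: eq_bigr => i _; rewrite coefD rmorphD mulrDr.
Qed.

Lemma skew_mulNl p q : (- p) ** q = - (p ** q).
Proof.
apply/polyP => k; rewrite coefN !coef_skew_mul -sumrN.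
by apply: eq_bigr => i _; rewrite coefN mulNr.
Qed.

Lemma skew_mulBl p q r : (p - q) ** r = p ** r - q ** r.
Proof. by rewrite skew_mulDl skew_mulNl. Qed.

Lemma skew_mul0l q : 0 ** q = 0.
Proof.
by apply/polyP => k; rewrite coef_skew_mul coef0 big1 // => i _; rewrite coef0 mul0r.
Qed.

Lemma skew_mul0r p : p ** 0 = 0.
Proof.
by apply/polyP => k; rewrite coef_skew_mul coef0 big1 // => i _; rewrite coef0 rmorph0 mulr0.
Qed.

Lemma skew_mul_suml I (s : seq I) (P : pred I) (G : I -> {poly F}) q :
  (\sum_(i <- s | P i) G i) ** q = \sum_(i <- s | P i) G i ** q.
Proof.
by apply: (big_morph (skew_mul th ^~ q)) => [p r|]; rewrite ?skew_mulDl ?skew_mul0l.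
Qed.

Lemma skew_mul_sumr I (s : seq I) (P : pred I) (G : I -> {poly F}) p :
  p ** (\sum_(i <- s | P i) G i) = \sum_(i <- s | P i) p ** G i.
Proof. by apply: big_morph => [q r|]; rewrite ?skew_mulDr ?skew_mul0r. Qed.

Lemma skew_mulZXnl a i q : (a *: 'X^i) ** q = a *: ('X^i * map_poly (iter i th) q).
Proof.
apply/polyP => k; rewrite coef_skew_mul coefZ coefXnM.
under eq_bigr do rewrite coefZ coefXn mulrAC mulr_natr mulrb.
rewrite -big_mkcond (big_ord1_eq _ (fun j => a * iter j th q`_(k - j))) ltnS.
by case: ltnP => _; rewrite ?mulr0 // coef_map.
Qed.

Lemma skew_mulCl a q : a%:P ** q = a *: q.
Proof.
by rewrite -alg_polyC -(expr0 'X) skew_mulZXnl mul1r map_poly_id.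
Qed.

Lemma skew_mul1l q : 1 ** q = q.
Proof. by rewrite -polyC1 skew_mulCl scale1r. Qed.

Lemma skew_mul_monomial a b i j :
  (a *: 'X^i) ** (b *: 'X^j) = (a * iter i th b) *: 'X^(i + j).
Proof.
by rewrite skew_mulZXnl map_polyZ map_polyXn -scalerAr scalerA exprD.
Qed.

Lemma skew_mulXn_fixed i : (forall x, iter i th x = x) -> forall q, 'X^i ** q = 'X^i * q.
Proof.
move=> ith_id q; rewrite -[X in X ** _]scale1r skew_mulZXnl scale1r.
by rewrite map_poly_id.
Qed.

Lemma skew_mul_fixedr p r : (forall j, th r`_j = r`_j) -> p ** r = p * r.
Proof.
move=> th_r; apply/polyP => k; rewrite coef_skew_mul coefM; apply: eq_bigr => i _.
by rewrite iter_fix.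
Qed.

Lemma skew_mulA p q r : p ** (q ** r) = (p ** q) ** r.
Proof.
apply/polyP => k; rewrite !coef_skew_mul.
under [RHS]eq_bigr do rewrite coef_skew_mul mulr_suml.
rewrite (sum_triangle (fun j i => p`_j * iter j th q`_(i - j) * iter i th r`_(k - i))).
apply: eq_bigr => j _; rewrite coef_skew_mul rmorph_sum mulr_sumr.
apply: eq_bigr => l _.
by rewrite rmorphM mulrA addKn subnDA iterD.
Qed.

Lemma coef_skew_mul_lead p q :
  (p ** q)`_((size p).-1 + (size q).-1) = lead_coef p * iter (size p).-1 th (lead_coef q).
Proof.
have lt_p_pq : ((size p).-1 < ((size p).-1 + (size q).-1).+1)%N by rewrite ltnS leq_addr.
rewrite coef_skew_mul (bigD1 (Ordinal lt_p_pq)) //= addKn big1 ?addr0 // => j /eqP neq_j.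
have {}neq_j : nat_of_ord j != (size p).-1 by apply: contra_not_neq neq_j => e; apply: val_inj.
have [lt_j_p|le_p_j] := ltnP j (size p).-1.
  by rewrite [q`__]nth_default ?rmorph0 ?mulr0 //; size_lia.
by rewrite [p`__]nth_default ?mul0r //; size_lia.
Qed.

Lemma size_skew_mul p q : p != 0 -> q != 0 -> size (p ** q) = (size p + size q).-1.
Proof.
move=> p0 q0; have := size_poly_gt0 p; have := size_poly_gt0 q; rewrite p0 q0 => sq sp.
apply/eqP; rewrite eqn_leq; apply/andP; split.
  apply/leq_sizeP => j le_j; rewrite coef_skew_mul big1 // => i _.
  have [lt_i_p|le_p_i] := ltnP i (size p); last by rewrite nth_default ?mul0r.
  by rewrite [q`__]nth_default ?rmorph0 ?mulr0 //; size_lia.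
have lead_pq : (p ** q)`_((size p).-1 + (size q).-1) != 0.
  by rewrite coef_skew_mul_lead mulf_neq0 ?fmorph_eq0 ?lead_coef_eq0.
have : ((size p).-1 + (size q).-1 < size (p ** q))%N.
  by rewrite ltnNge; apply: contra lead_pq => /leq_sizeP ->.
size_lia.
Qed.

Lemma size_skew_factor f g N :
  g != 0 -> (size (f ** g) <= N)%N -> (size f <= N.+1 - size g)%N.
Proof.
have [->|f0 g0] := eqVneq f 0; first by rewrite size_poly0.
by rewrite size_skew_mul //; have := size_poly_gt0 g; rewrite g0; size_lia.
Qed.

Lemma skew_mul_const_factor f g :
  g != 0 -> (size (f ** g) <= size g)%N -> f ** g = f`_0 *: g.
Proof.
move=> g0 /(size_skew_factor g0); rewrite subSnn => /size1_polyC {1}->.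
by rewrite skew_mulCl.
Qed.

Definition recip N p : {poly F} := \poly_(j < N.+1) th p`_(N - j).

Fact recip_is_zmod_morphism N : zmod_morphism (recip N).
Proof.
move=> p q; apply/polyP => j; rewrite coefB !coef_poly.
by case: ifP; rewrite ?coefB ?rmorphB ?subr0.
Qed.
HB.instance Definition _ N :=
  GRing.isZmodMorphism.Build _ _ (recip N) (recip_is_zmod_morphism N).

Lemma recipZ N a p : recip N (a *: p) = th a *: recip N p.
Proof.
apply/polyP => j; rewrite coefZ !coef_poly.
by case: ifP; rewrite ?coefZ ?rmorphM ?mulr0.
Qed.

Lemma recip_monomial N a k : (k <= N)%N -> recip N (a *: 'X^k) = th a *: 'X^(N - k).
Proof.
move=> le_k_N; rewrite recipZ; congr (_ *: _); apply/polyP => j.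
rewrite coef_poly !coefXn; case: ltnP => [lt_j_N|le_N_j].
  have -> : (N - j == k)%N = (j == N - k)%N by apply/eqP/eqP; lia.
  by case: eqP; rewrite ?rmorph1 ?rmorph0.
by have -> : (j == N - k)%N = false by apply/eqP; lia.
Qed.

Lemma recip1 N : recip N 1 = 'X^N.
Proof. by rewrite -(scale1r 1) -(expr0 'X) recip_monomial // rmorph1 scale1r subn0. Qed.

Lemma theta_palindromicE p : theta_palindromic th p <-> p != 0 /\ recip (size p).-1 p = p.
Proof.
rewrite /theta_palindromic; split=> -[p0 pal]; split=> //.
  apply/polyP => j; rewrite coef_poly; case: ltnP => [lt_j_p|le_p_j].
    by rewrite [RHS]pal // -ltnS.
  by rewrite nth_default //; have := size_poly_gt0 p; rewrite p0; size_lia.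
by move=> i le_i_p; rewrite -[in LHS]pal coef_poly ltnS le_i_p.
Qed.

Section Involution.
Hypothesis thK : involutive th.

Lemma iter_involutive k x : iter k th x = if odd k then th x else x.
Proof. by elim: k => //= k ->; case: (odd k); rewrite ?thK. Qed.

Lemma iter_even k : ~~ odd k -> forall x, iter k th x = x.
Proof. by move=> /negbTE even_k x; rewrite iter_involutive even_k. Qed.

Lemma recipK N p : (size p <= N.+1)%N -> recip N (recip N p) = p.
Proof.
move=> le_p_N; apply/polyP => j; rewrite coef_poly.
case: ltnP => [lt_j_N|le_N_j]; last by rewrite nth_default //; apply: leq_trans le_N_j.
by rewrite coef_poly ltnS leq_subr thK subKn // -ltnS.
Qed.

(* The two factors pick up [th^(i + 1)] and [th^(N - m - i + 1)] respectively on the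
   coefficients of [g]; these agree because [N - m] is even. *)
Lemma recip_skew_mul N m f g :
  ~~ odd (N - m) -> (m <= N)%N -> (size f <= (N - m).+1)%N -> (size g <= m.+1)%N ->
  recip N (f ** g) = recip (N - m) f ** recip m g.
Proof.
move=> even_Nm le_m_N le_f le_g.
rewrite -[f](take_poly_id le_f) -[g](take_poly_id le_g) /take_poly !poly_def.
rewrite skew_mul_suml !raddf_sum skew_mul_suml; apply: eq_bigr => i _.
rewrite skew_mul_sumr !raddf_sum skew_mul_sumr; apply: eq_bigr => j _.
have := ltn_ord i; have := ltn_ord j; rewrite !ltnS => le_j_m le_i_Nm.
rewrite /= skew_mul_monomial !recip_monomial ?skew_mul_monomial; try lia.
congr (_ *: 'X^_); last by lia.
rewrite rmorphM -iterS -iterSr !iter_involutive /= oddB //.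
by rewrite (negbTE even_Nm).
Qed.

End Involution.

End SkewPolynomials.

Lemma hilbert90_pchar2 (F : fieldType) (th : {rmorphism F -> F}) (lam : F) :
  (2 \in [pchar F])%N -> th lam * lam = 1 -> exists2 mu, mu != 0 & th mu * lam = mu.
Proof.
move=> char2 norm_lam; have [->|lam_neq1] := eqVneq lam 1.
  by exists 1; rewrite ?oner_eq0 ?rmorph1 ?mulr1.
exists (1 + lam); last by rewrite rmorphD rmorph1 mulrDl norm_lam mul1r addrC.
by rewrite addr_eq0 (oppr_pchar2 char2) eq_sym.
Qed.

Section Codewords.
Variables (F : fieldType) (n : nat).
Implicit Types c : 'rV[F]_n.

Lemma poly_of_vecE c : poly_of_vec c = rVpoly c.
Proof.
rewrite /poly_of_vec [in RHS](row_sum_delta c) linear_sum.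
by apply: eq_bigr => i _; rewrite linearZ /= rVpoly_delta mul_polyC.
Qed.

Lemma size_rVpoly c : (size (rVpoly c) <= n)%N.
Proof. exact: size_poly. Qed.

Definition rev_vec (th : F -> F) c : 'rV[F]_n := \row_(i < n) th (c ord0 (rev_ord i)).

Lemma rVpoly_rev_vec (th : {rmorphism F -> F}) c :
  rVpoly (rev_vec th c) = recip th n.-1 (rVpoly c).
Proof.
apply/polyP => k; rewrite coef_rVpoly coef_poly.
case: insubP => [i _ <-|]; last first.
  rewrite -ltnNge => le_n_k; case: ifP => // lt_k_n; rewrite nth_default ?rmorph0 //.
  by apply: leq_trans (size_rVpoly c) _; lia.
have lt_i_n := ltn_ord i; rewrite /= mxE ifT; last by lia.
have -> : (n.-1 - i)%N = rev_ord i by rewrite /=; lia.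
by rewrite coef_rVpoly_ord.
Qed.

End Codewords.

Section SkewCodes.
Variables (F : fieldType) (th : {rmorphism F -> F}) (n : nat).
Local Notation "p ** q" := (skew_mul th p q) (at level 40, left associativity).

Lemma skew_code_genZ a g c :
  a != 0 -> skew_code_gen th n (a *: g) c <-> skew_code_gen th n g c.
Proof.
move=> a0; rewrite /skew_code_gen; split=> -[f [h ->]].
  by exists (f ** a%:P), h; rewrite -skew_mulA skew_mulCl.
by exists (f ** (a^-1)%:P), h; rewrite -skew_mulA skew_mulCl scalerA mulVf // scale1r.
Qed.

Variables (g k : {poly F}).
Hypothesis Xn_sub1 : 'X^n - 1 = k ** g.

Lemma skew_code_genP c : skew_code_gen th n g c <-> exists f, rVpoly c = f ** g.
Proof.
rewrite /skew_code_gen poly_of_vecE; split=> [[f [h ->]]|[f ->]].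
  by exists (f + h ** k); rewrite Xn_sub1 skew_mulA skew_mulDl.
by exists f, 0; rewrite skew_mul0l addr0.
Qed.

Hypotheses (n_gt0 : (0 < n)%N) (even_n : ~~ odd n) (odd_deg : odd (size g).-1).
Local Notation m := (size g).-1.

Lemma generator_neq0 : g != 0.
Proof.
apply: contra_eqN (size_Xn_sub_1 F n_gt0) => /eqP g0.
by rewrite Xn_sub1 g0 skew_mul0r size_poly0.
Qed.

Lemma size_generator : size g = m.+1.
Proof. by rewrite prednK // size_poly_gt0 generator_neq0. Qed.

Lemma deg_generator_lt : (m < n)%N.
Proof.
have k0 : k != 0.
  apply: contra_eqN (size_Xn_sub_1 F n_gt0) => /eqP k0.
  by rewrite Xn_sub1 k0 skew_mul0l size_poly0.
have := size_Xn_sub_1 F n_gt0; rewrite Xn_sub1 size_skew_mul ?generator_neq0 //.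
have : m != n by apply: contraNneq even_n => <-.
by have := size_poly_gt0 k; rewrite k0; size_lia.
Qed.

Lemma even_codeg : ~~ odd (n.-1 - m).
Proof.
have lt_m_n := deg_generator_lt.
have -> : (n.-1 - m = n - m.+1)%N by lia.
by rewrite oddB //= odd_deg (negbTE even_n).
Qed.

Hypothesis thK : involutive th.
Local Notation C := (skew_code_gen th n g).

Lemma skew_code_rev_vec : theta_palindromic th g -> forall c, C c -> C (rev_vec th c).
Proof.
case/theta_palindromicE => _ pal c /skew_code_genP [f ef].
have lt_m_n := deg_generator_lt; have g0 := generator_neq0.
have le_f : (size f <= n - m)%N.
  by have := size_rVpoly c; rewrite ef => /(size_skew_factor g0); size_lia.
apply/skew_code_genP; exists (recip th (n.-1 - m) f).
rewrite rVpoly_rev_vec ef (recip_skew_mul thK (m := m)) ?pal ?even_codeg //; size_lia.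
Qed.

Lemma recip_generator_scalar f :
  recip th n.-1 g = f ** g -> exists lam, recip th m g = lam *: g.
Proof.
move=> rev_g; have lt_m_n := deg_generator_lt.
set gs := recip th m g.
have recip_g : recip th n.-1 g = 'X^(n.-1 - m) ** gs.
  rewrite -[g in LHS](skew_mul1l th) (recip_skew_mul thK (m := m)) ?recip1 //.
  - exact: even_codeg.
  - lia.
  - by rewrite size_poly1.
  - by rewrite size_generator.
have Xn_gs : 'X^(m.+1) ** ('X^(n.-1 - m) ** gs) = gs + gs ** ('X^n - 1).
  have even_m1 : ~~ odd m.+1 by rewrite /= odd_deg.
  rewrite skew_mulA (skew_mulXn_fixed (iter_even thK even_m1)) -exprD.
  have -> : (m.+1 + (n.-1 - m))%N = n by lia.
  rewrite (skew_mulXn_fixed (iter_even thK even_n)) skew_mul_fixedr => [|j].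
    by rewrite mulrC mulrBr mulr1 addrC subrK.
  by rewrite coefB coefXn coef1 rmorphB !rmorph_nat.
have gs_mul : gs = ('X^(m.+1) ** f - gs ** k) ** g.
  by rewrite skew_mulBl -!skew_mulA -rev_g recip_g Xn_gs Xn_sub1 addrK.
have size_gs : (size gs <= size g)%N by rewrite [X in (_ <= X)%N]size_generator size_poly.
by eexists; rewrite {1}gs_mul skew_mul_const_factor ?generator_neq0 -?gs_mul.
Qed.

Lemma rev_vec_closed_palindromic :
  (2 \in [pchar F])%N -> (forall c, C c -> C (rev_vec th c)) ->
  exists2 g', theta_palindromic th g' & forall c, C c <-> skew_code_gen th n g' c.
Proof.
move=> char2 rev_closed; have g0 := generator_neq0.
have le_g_n : (size g <= n)%N by rewrite size_generator deg_generator_lt.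
have /rev_closed/skew_code_genP[f] : C (poly_rV g).
  by apply/skew_code_genP; exists 1; rewrite poly_rV_K // skew_mul1l.
rewrite rVpoly_rev_vec poly_rV_K // => /recip_generator_scalar[lam gs_lam].
have norm_lam : th lam * lam = 1.
  have : (th lam * lam) *: g = 1 *: g.
    by rewrite -scalerA -gs_lam -recipZ -gs_lam (recipK thK) ?scale1r // size_generator.
  move/eqP; rewrite -subr_eq0 -scalerBl scaler_eq0 (negbTE g0) orbF subr_eq0.
  by move/eqP.
have [mu mu0 mu_lam] := hilbert90_pchar2 char2 norm_lam.
exists (mu *: g); last by move=> c; rewrite skew_code_genZ.
apply/theta_palindromicE; rewrite size_scale // scaler_eq0 negb_or mu0 g0.
by rewrite recipZ gs_lam scalerA mu_lam.
Qed.

End SkewCodes.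

Lemma rev_enum_ord n : rev (enum 'I_n) = map (@rev_ord n) (enum 'I_n).
Proof.
apply: (inj_map val_inj); rewrite map_rev val_enum_ord -map_comp.
rewrite (map_comp (fun i => n - i.+1)%N val) val_enum_ord.
apply: (eq_from_nth (x0 := 0%N)); first by rewrite size_rev size_map.
move=> i; rewrite size_rev size_iota => lt_i_n.
by rewrite nth_rev ?size_iota // (nth_map 0%N) ?size_iota // !nth_iota //; lia.
Qed.

Section DNACodes.
Variables (s : nat) (F : finFieldType) (tau : F -> seq nucleotide).
Hypothesis htau : DNA_correspondence s tau.

Lemma phi_DNA_rev_vec n (c : 'rV[F]_n) :
  phi_DNA tau (rev_vec (theta s (F:=F)) c) = rev (phi_DNA tau c).
Proof.
case: htau => _ _ _ tau_rev.
rewrite /phi_DNA rev_flatten -map_rev -map_rev rev_enum_ord -!map_comp.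
by congr flatten; apply: eq_map => i /=; rewrite mxE tau_rev.
Qed.

Lemma phi_DNA_inj n : injective (@phi_DNA F tau n).
Proof.
case: htau => tau_size tau_inj _ _ c d eq_cd.
have shape_tau (e : 'rV[F]_n) :
    shape [seq tau (e ord0 i) | i <- enum 'I_n] = [seq (2 * s)%N | _ <- enum 'I_n].
  by rewrite /shape -map_comp; apply: eq_map => i; exact: tau_size.
have : [seq tau (c ord0 i) | i <- enum 'I_n] = [seq tau (d ord0 i) | i <- enum 'I_n].
  by rewrite -[LHS]flattenK -[RHS]flattenK !shape_tau; congr reshape.
rewrite (map_comp tau (c ord0)) (map_comp tau (d ord0)).
move=> /(inj_map tau_inj) /eq_in_map eq_cd_i.
by apply/rowP => i; rewrite eq_cd_i ?mem_enum.
Qed.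

Lemma reversible_DNAP n (C : 'rV[F]_n -> Prop) :
  reversible_DNA tau C <-> forall c, C c -> C (rev_vec (theta s (F:=F)) c).
Proof.
split=> rev_closed c Cc; last first.
  by exists (rev_vec (theta s (F:=F)) c); split; [exact: rev_closed | exact: phi_DNA_rev_vec].
have [d [Cd phi_d]] := rev_closed c Cc.
suff -> : rev_vec (theta s (F:=F)) c = d by [].
by apply: phi_DNA_inj; rewrite phi_DNA_rev_vec phi_d.
Qed.

End DNACodes.

Section Theta.
Variables (s : nat) (F : finFieldType).
Hypothesis hF : #|F| = (4 ^ (2 * s))%N.

Lemma theta_field_pchar2 : (2 \in [pchar F])%N.
Proof.
have card_F : #|F| = (2 ^ (2 * (2 * s)))%N by rewrite hF (_ : 4 = 2 ^ 2)%N // -expnM.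
exact: card_finPcharP card_F _.
Qed.

Fact theta_is_nmod_morphism : nmod_morphism (theta s (F:=F)).
Proof.
split=> [|x y]; first by rewrite /theta expr0n expn_eq0.
apply: exprDn_pchar; rewrite (_ : 4 = 2 ^ 2)%N // -expnM pnatX pnatE //.
by rewrite theta_field_pchar2.
Qed.

Fact theta_is_monoid_morphism : monoid_morphism (theta s (F:=F)).
Proof. by split=> [|x y]; rewrite /theta ?expr1n ?exprMn. Qed.

Definition theta_rmorphism : {rmorphism F -> F} := HB.pack (theta s (F:=F))
  (GRing.isNmodMorphism.Build F F (theta s (F:=F)) theta_is_nmod_morphism)
  (GRing.isMonoidMorphism.Build F F (theta s (F:=F)) theta_is_monoid_morphism).

Lemma theta_involutive : involutive (theta s (F:=F)).
Proof. by move=> x; rewrite /theta -exprM -expnD addnn -mul2n -hF expf_card. Qed.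

End Theta.

Unset Implicit Arguments.

Theorem theorem2 (s : nat) (F : finFieldType)
  (hs : (1 <= s)%N) (hF : #|F| = (4 ^ (2 * s))%N)
  (tau : F -> seq nucleotide) (htau : DNA_correspondence s tau)
  (n : nat) (hn : (0 < n)%N) (hneven : ~~ odd n)
  (g : {poly F})
  (hdiv : skew_right_divides (theta s (F:=F)) g ('X^n - 1))
  (hm : odd (size g).-1) :
  (theta_palindromic (theta s (F:=F)) g ->
     reversible_DNA tau (skew_code_gen (theta s (F:=F)) n g)) /\
  (reversible_DNA tau (skew_code_gen (theta s (F:=F)) n g) ->
     exists g' : {poly F}, theta_palindromic (theta s (F:=F)) g' /\
       (forall c : 'rV[F]_n,
          skew_code_gen (theta s (F:=F)) n g c <-> skew_code_gen (theta s (F:=F)) n g' c)).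
Proof.
have thK := theta_involutive hF.
case: hdiv => k Xn_sub1.
split=> [pal | /(reversible_DNAP htau) rev_closed].
  apply/(reversible_DNAP htau).
  exact: (skew_code_rev_vec (th := theta_rmorphism hF) Xn_sub1 hn hneven hm thK pal).
have [g' pal' same_code] := rev_vec_closed_palindromic (th := theta_rmorphism hF)
  Xn_sub1 hn hneven hm thK (theta_field_pchar2 hF) rev_closed.
by exists g'.
Qed.
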